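(* Let $0<\alpha<\beta<1$, let $\theta\in[0,1)$ and $\varphi\in V(\theta)$, and let $\theta_\varepsilon\in[0,1)$ satisfy $\theta_\varepsilon\to\theta$ as $\varepsilon\to0$. Then there exist $\varphi_\varepsilon\in V(\theta_\varepsilon)$ such that $\varphi_\varepsilon\to\varphi$ strongly in $H^1(0,1)$ as $\varepsilon\to0$.
   Context: Let $p$ be a $1$-periodic measurable function on $\mathbb{R}$ with $p>0$ and $p,p^{-1}\in L^\infty(0,1)$. Write $Q=(0,1)$, $Q_1=(0,\alpha)\cup(\beta,1)$. For $\theta\in[0,1)$, $H^1_\theta(Q)=\{u\in H^1(0,1):u(1)=e^{2\pi i\theta}u(0)\}$ (continuous representatives), and $V(\theta)=\{v\in H^1_\theta(Q): p(y)v'(y)=0\text{ for a.e. } y\in Q_1\}$. *)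

From HB Require Import structures.
From mathcomp Require Import all_boot all_order all_algebra.
From mathcomp Require Import all_classical all_reals all_analysis.
From mathcomp Require Import complex.
Set Implicit Arguments. Unset Strict Implicit. Unset Printing Implicit Defensive.
Import Order.TTheory GRing.Theory Num.Theory numFieldNormedType.Exports.
Local Open Scope classical_set_scope.
Local Open Scope ring_scope.

Section Sobolev1D.
Context {R : realType}.
Local Notation mu := (@lebesgue_measure R).

Definition sqmod (z : R[i]) : R := (complex.Re z) ^+ 2 + (complex.Im z) ^+ 2.

Definition L2 (D : set R) (f : R -> R) : Prop :=
  measurable_fun D f /\ (\int[mu]_(x in D) ((f x) ^+ 2)%:E < +oo)%E.

Definition cL2 (D : set R) (f : R -> R[i]) : Prop :=
  L2 D (fun x => complex.Re (f x)) /\ L2 D (fun x => complex.Im (f x)).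

(* g is a weak derivative (in L^2(0,1)) of u, u being its continuous
   representative on [0,1]:  u x = u 0 + \int_0^x g  for x in [0,1]. *)
Definition wderiv01 (u g : R -> R[i]) : Prop :=
  cL2 `[0, 1] g /\
  forall x : R, 0 <= x <= 1 ->
    u x = u 0 + Complex (Rintegral mu `[0, x] (fun t => complex.Re (g t)))
                        (Rintegral mu `[0, x] (fun t => complex.Im (g t))).

Definition H1 (u : R -> R[i]) : Prop := exists g, wderiv01 u g.

Definition H1theta (theta : R) (u : R -> R[i]) : Prop :=
  H1 u /\ u 1 = Complex (cos (2 * pi * theta)) (sin (2 * pi * theta)) * u 0.

Definition Q1 (alpha beta : R) : set R := `]0, alpha[ `|` `]beta, 1[.

Definition Vsp (p : R -> R) (alpha beta theta : R) (v : R -> R[i]) : Prop :=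
  H1theta theta v /\
  exists g, wderiv01 v g /\
    {ae mu, forall y, Q1 alpha beta y -> Complex (p y) 0 * g y = 0}.

Definition H1dist2 (u g v h : R -> R[i]) : R :=
  Rintegral mu `[0, 1] (fun x => sqmod (u x - v x)) +
  Rintegral mu `[0, 1] (fun x => sqmod (g x - h x)).

Definition admissible_coef (p : R -> R) : Prop :=
  (forall x, p (x + 1) = p x) /\
  measurable_fun setT p /\
  (forall x, 0 < p x) /\
  (exists M : R, {ae mu, forall y, y \in `]0, 1[%R -> `|p y| <= M}) /\
  (exists M : R, {ae mu, forall y, y \in `]0, 1[%R -> `|(p y)^-1| <= M}).

End Sobolev1D.

From mathcomp Require Import all_boot all_order all_algebra.
From mathcomp Require Import all_classical all_reals all_analysis.
From mathcomp Require Import complex measurable_realfun lra ring.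
Set Implicit Arguments.
Unset Strict Implicit.
Unset Printing Implicit Defensive.
Import Order.TTheory GRing.Theory Num.Theory numFieldNormedType.Exports.
Local Open Scope classical_set_scope.
Local Open Scope ring_scope.

(* Correct phi by a multiple of the ramp eta rising linearly from 0 to 1 on
   [alpha, beta]: phi_e := phi + k_e eta with k_e := e^{2 pi i theta_e} phi(0) - phi(1).
   Then phi_e(0) = phi(0), phi_e(1) = e^{2 pi i theta_e} phi(0), and phi_e' = phi'
   on Q_1 where eta is constant, so phi_e lies in V(theta_e).  Finally
   ||phi_e - phi||_{H^1} = |k_e| ||eta||_{H^1}, and k_e tends to
   e^{2 pi i theta} phi(0) - phi(1) = 0. *)

Section L2_finite_measure.
Context {R : realType}.
Local Notation mu := (@lebesgue_measure R).
Variable D : set R.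
Hypotheses (mD : measurable D) (finD : (mu D < +oo)%E).

Lemma integrable_bounded (f : R -> R) (M : R) :
  measurable_fun D f -> (forall x, D x -> `|f x| <= M) ->
  mu.-integrable D (EFin \o f).
Proof.
move=> mf fM; apply: measurable_bounded_integrable => //.
exists M; split; first exact: num_real.
by move=> N /ltW MN x /fM /le_trans; apply.
Qed.

Lemma L2_sqr_integrableE (f : R -> R) : measurable_fun D f ->
  L2 D f <-> mu.-integrable D (EFin \o (fun x => f x ^+ 2)).
Proof.
move=> mf; have mf2 : measurable_fun D (EFin \o (fun x => f x ^+ 2)).
  by apply/measurable_EFinP; exact: measurable_funX.
have abs_sqr : (\int[mu]_(x in D) `|(f x ^+ 2)%:E| =
                \int[mu]_(x in D) (f x ^+ 2)%:E)%E.
  by apply: eq_integral => x _; rewrite gee0_abs // lee_fin sqr_ge0.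
split=> [[_ fi]|/integrableP[_ fi]]; last by split; rewrite // -abs_sqr.
by apply/integrableP; split; rewrite // abs_sqr.
Qed.

Lemma L2_sqr_integrable (f : R -> R) :
  L2 D f -> mu.-integrable D (EFin \o (fun x => f x ^+ 2)).
Proof. by move=> Lf; apply/(L2_sqr_integrableE Lf.1). Qed.

Lemma L2_bounded (f : R -> R) (M : R) : measurable_fun D f ->
  (forall x, D x -> `|f x| <= M) -> L2 D f.
Proof.
move=> mf fM; apply/L2_sqr_integrableE => //.
apply: (@integrable_bounded _ (M ^+ 2)); first exact: measurable_funX.
move=> x /fM fxM; rewrite normrX lerXn2r ?nnegrE //.
exact: le_trans fxM.
Qed.

Lemma L2_integrable (f : R -> R) : L2 D f -> mu.-integrable D (EFin \o f).
Proof.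
move=> Lf; have [mf _] := Lf.
have one_int : mu.-integrable D (EFin \o cst (1 : R)).
  by apply: (@integrable_bounded _ 1) => // x _; rewrite normr1.
have i1 := integrableD (mu:=mu) mD one_int (L2_sqr_integrable Lf).
apply: (le_integrable (mu:=mu) mD _ _ i1); first exact/measurable_EFinP.
move=> x _ /=; rewrite lee_fin [X in _ <= X]ger0_norm ?addr_ge0 ?sqr_ge0 //.
have [le1|gt1] := lerP `|f x| 1; first by rewrite (le_trans le1) // lerDl sqr_ge0.
rewrite -[f x ^+ 2]ger0_norm ?sqr_ge0 // normrX; nra.
Qed.

Lemma L2D (f g : R -> R) : L2 D f -> L2 D g -> L2 D (fun x => f x + g x).
Proof.
move=> Lf Lg; have [mf _] := Lf; have [mg _] := Lg.
have mfg : measurable_fun D (fun x => f x + g x) by exact: measurable_funD.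
apply/L2_sqr_integrableE => //.
have i2 := integrableZl (mu:=mu) mD 2
  (integrableD (mu:=mu) mD (L2_sqr_integrable Lf) (L2_sqr_integrable Lg)).
apply: (le_integrable (mu:=mu) mD _ _ i2).
  by apply/measurable_EFinP; exact: measurable_funX.
move=> x _ /=; rewrite lee_fin !ger0_norm ?sqr_ge0 ?mulr_ge0 ?addr_ge0 ?sqr_ge0 //.
have := sqr_ge0 (f x - g x); nra.
Qed.

Lemma L2Zl (c : R) (f : R -> R) : L2 D f -> L2 D (fun x => c * f x).
Proof.
move=> Lf; have [mf _] := Lf.
apply/L2_sqr_integrableE; first exact: measurable_funM.
have -> : (fun x => (c * f x) ^+ 2) = (fun x => c ^+ 2 * f x ^+ 2).
  by apply/funext => x; rewrite exprMn.
exact: integrableZl (L2_sqr_integrable Lf).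
Qed.

End L2_finite_measure.

Section weak_derivative.
Context {R : realType}.
Local Notation mu := (@lebesgue_measure R).
Local Notation I01 := (`[0, 1]%classic : set R).
Local Open Scope complex_scope.

Let measurable01 : measurable I01. Proof. exact: measurable_itv. Qed.

Lemma lebesgue_itv01_lty : (mu I01 < +oo)%E.
Proof. by rewrite /= lebesgue_measure_itv /= lte01 oppr0 adde0 ltry. Qed.

Lemma integrable_itv_sub (f : R -> R) (a b x : R) : a <= x <= b ->
  mu.-integrable `[a, b] (EFin \o f) -> mu.-integrable `[a, x] (EFin \o f).
Proof.
move=> /andP[_ xb]; apply: integrableS; try exact: measurable_itv.
by move=> t /=; rewrite !in_itv /= => /andP[-> /le_trans]; apply.
Qed.

Lemma ReD (z w : R[i]) : complex.Re (z + w) = complex.Re z + complex.Re w.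
Proof. by case: z; case: w. Qed.

Lemma ImD (z w : R[i]) : complex.Im (z + w) = complex.Im z + complex.Im w.
Proof. by case: z; case: w. Qed.

Lemma ReCM (r : R) (z : R[i]) : complex.Re (r%:C * z) = r * complex.Re z.
Proof. by case: z => x y /=; ring. Qed.

Lemma ImCM (r : R) (z : R[i]) : complex.Im (r%:C * z) = r * complex.Im z.
Proof. by case: z => x y /=; ring. Qed.

Lemma wderiv01D (u g v h : R -> R[i]) : wderiv01 u g -> wderiv01 v h ->
  wderiv01 (fun x => u x + v x) (fun x => g x + h x).
Proof.
move=> [[gRe gIm] ug] [[hRe hIm] vh].
have ReDf : (fun t => complex.Re (g t + h t)) =
            (fun t => complex.Re (g t) + complex.Re (h t)).
  by apply/funext => t; exact: ReD.
have ImDf : (fun t => complex.Im (g t + h t)) =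
            (fun t => complex.Im (g t) + complex.Im (h t)).
  by apply/funext => t; exact: ImD.
split.
  by rewrite /cL2 ReDf ImDf; split; apply: (L2D (D := I01)); try exact: measurable_itv.
move=> x x01; have int0x k : L2 `[0, 1] k -> mu.-integrable `[0, x] (EFin \o k).
  by move/(L2_integrable measurable01 lebesgue_itv01_lty); exact: integrable_itv_sub.
rewrite (ug x x01) (vh x x01) ReDf ImDf !RintegralD //; try exact: int0x.
by case: (u 0) (v 0) => [u1 u2] [v1 v2] /=; congr (_ +i* _); ring.
Qed.

Lemma wderiv01_scale (f f' : R -> R) (z : R[i]) : L2 `[0, 1] f' ->
  (forall x, 0 <= x <= 1 -> f x = f 0 + Rintegral mu `[0, x] f') ->
  wderiv01 (fun x => (f x)%:C * z) (fun x => (f' x)%:C * z).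
Proof.
move=> Lf' fE.
have ReCMf : (fun t => complex.Re ((f' t)%:C * z)) = (fun t => complex.Re z * f' t).
  by apply/funext => t; rewrite ReCM mulrC.
have ImCMf : (fun t => complex.Im ((f' t)%:C * z)) = (fun t => complex.Im z * f' t).
  by apply/funext => t; rewrite ImCM mulrC.
split; first by rewrite /cL2 ReCMf ImCMf; split; apply: (L2Zl measurable01).
move=> x x01; have int0x : mu.-integrable `[0, x] (EFin \o f').
  exact/(integrable_itv_sub x01)/(L2_integrable measurable01 lebesgue_itv01_lty).
rewrite ReCMf ImCMf !RintegralZl // ?(fE x x01); try exact: measurable_itv.
by clear ReCMf ImCMf; case: z => z1 z2 /=; congr (_ +i* _); ring.
Qed.

End weak_derivative.

Section ramp.
Context {R : realType}.
Local Notation mu := (@lebesgue_measure R).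
Variables a b : R.

Definition ramp (x : R) : R := (b - a)^-1 * Num.max 0 (Num.min x b - a).
Definition ramp_deriv (x : R) : R := (b - a)^-1 * \1_`[a, b] x.

Lemma ramp_deriv_Q1 (y : R) : Q1 a b y -> ramp_deriv y = 0.
Proof.
move=> Qy; rewrite /ramp_deriv indicE memNset ?mulr0 //= in_itv /= => /andP[ay yb].
by case: Qy => /=; rewrite in_itv /= => /andP[y1 y2]; lra.
Qed.

Hypotheses (a_ge0 : 0 <= a) (ab : a < b).

Let ba_gt0 : 0 < b - a. Proof. by rewrite subr_gt0. Qed.

Lemma ramp0 : ramp 0 = 0.
Proof.
by rewrite /ramp min_l ?(le_trans a_ge0 (ltW ab)) // max_l ?mulr0 // subr_le0.
Qed.

Lemma ramp1 : b <= 1 -> ramp 1 = 1.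
Proof.
by move=> b1; rewrite /ramp min_r // max_r ?subr_ge0 ?ltW // mulVf ?gt_eqF.
Qed.

Lemma ramp_itv (x : R) : 0 <= ramp x <= 1.
Proof.
rewrite /ramp; apply/andP; split.
  by apply: mulr_ge0; [rewrite invr_ge0 ltW | rewrite le_max lexx].
rewrite ler_pdivrMl // mulr1 ge_max subr_ge0 ltW //=.
by rewrite lerB // ge_min lexx orbT.
Qed.

Lemma measurable_ramp : measurable_fun (`[0, 1] : set R) ramp.
Proof.
apply: measurable_funM; first exact: measurable_cst.
apply: (measurable_maxr (f := cst 0)); first exact: measurable_cst.
apply: measurable_funB; last exact: measurable_cst.
by apply: (measurable_minr (f := id)); [exact: measurable_id | exact: measurable_cst].
Qed.

Lemma measurable_ramp_deriv : measurable_fun (`[0, 1] : set R) ramp_deriv.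
Proof.
apply: measurable_funM; first exact: measurable_cst.
by apply: measurable_indic; exact: measurable_itv.
Qed.

Lemma L2_ramp : L2 `[0, 1] ramp.
Proof.
apply: (L2_bounded (M := 1) _ lebesgue_itv01_lty measurable_ramp) => [|x _].
  exact: measurable_itv.
by have /andP[r0 r1] := ramp_itv x; rewrite ger0_norm.
Qed.

Lemma L2_ramp_deriv : L2 `[0, 1] ramp_deriv.
Proof.
apply: (L2_bounded (M := (b - a)^-1) _ lebesgue_itv01_lty measurable_ramp_deriv)
  => [|x _]; first exact: measurable_itv.
have inv_ge0 : 0 <= (b - a)^-1 by rewrite invr_ge0 ltW.
rewrite /ramp_deriv normrM ger0_norm // indicE.
by case: (_ \in _); rewrite ?normr1 ?normr0 ?mulr1 ?mulr0.
Qed.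

Lemma ramp_integral (x : R) : ramp x = ramp 0 + Rintegral mu `[0, x] ramp_deriv.
Proof.
have cap : `[a, b] `&` `[0, x] = `[a, Num.min x b]%classic :> set R.
  apply/seteqP; split => t /=; rewrite !in_itv /= le_min.
    by move=> [/andP[-> ->] /andP[_ ->]].
  by move=> /andP[at_ /andP[tx tb]]; rewrite at_ tb tx (le_trans a_ge0 at_).
have ind_int : mu.-integrable `[0, x] (EFin \o \1_`[a, b]).
  by apply: integrableS (integrable_indic_itv a b true false) => //.
rewrite ramp0 add0r /ramp_deriv RintegralZl // /ramp; congr (_ * _).
rewrite /Rintegral integral_indic ?cap; try exact: measurable_itv.
rewrite /= lebesgue_measure_itv /= lte_fin; case: ifP => h /=.
  by rewrite max_r // subr_ge0 ltW.
by rewrite max_l // subr_le0 leNgt h.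
Qed.

End ramp.

Section perturbation.
Context {R : realType}.
Local Notation mu := (@lebesgue_measure R).
Local Notation I01 := (`[0, 1]%classic : set R).
Local Open Scope complex_scope.

Lemma sqmodCM (r : R) (z : R[i]) : sqmod (r%:C * z) = r ^+ 2 * sqmod z.
Proof. by case: z => x y; rewrite /sqmod /=; ring. Qed.

Lemma H1dist2_addCM (u g : R -> R[i]) (f f' : R -> R) (z : R[i]) :
  mu.-integrable I01 (EFin \o (fun x => f x ^+ 2)) ->
  mu.-integrable I01 (EFin \o (fun x => f' x ^+ 2)) ->
  H1dist2 (fun x => u x + (f x)%:C * z) (fun x => g x + (f' x)%:C * z) u g =
  sqmod z * (Rintegral mu I01 (fun x => f x ^+ 2) +
             Rintegral mu I01 (fun x => f' x ^+ 2)).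
Proof.
move=> f2 f'2; rewrite /H1dist2.
under eq_Rintegral do rewrite (addrC (u _)) addrK sqmodCM.
under [X in _ + X = _]eq_Rintegral do rewrite (addrC (g _)) addrK sqmodCM.
by rewrite !RintegralZr // -mulrDl mulrC.
Qed.

Definition expi2pi (t : R) : R[i] := Complex (cos (2 * pi * t)) (sin (2 * pi * t)).

Lemma cvg_expi2pi_sqmod {T : Type} (F : set_system T) {FF : Filter F}
    (t : T -> R) (t0 : R) (z w : R[i]) :
  t x @[x --> F] --> t0 -> expi2pi t0 * z = w ->
  sqmod (expi2pi (t x) * z - w) @[x --> F] --> 0.
Proof.
move=> t_t0; case: z w => [z1 z2] [w1 w2] [<- <-].
have arg_cvg : 2 * pi * t x @[x --> F] --> 2 * pi * t0.
  by apply: cvgM; [exact: cvg_cst | exact: t_t0].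
have c_cvg := cvg_comp _ _ arg_cvg (@continuous_cos R _).
have s_cvg := cvg_comp _ _ arg_cvg (@continuous_sin R _).
have sqr_cvg0 (f : T -> R) (l : R) :
    f x @[x --> F] --> l -> (f x - l) ^+ 2 @[x --> F] --> 0.
  move=> fl; have := cvgM (cvgB fl (cvg_cst l)) (cvgB fl (cvg_cst l)).
  by rewrite subrr mulr0; apply.
rewrite /sqmod /= -[X in _ --> X](addr0 0).
apply: cvgD; apply: sqr_cvg0.
- by apply: cvgB; apply: cvgM => //; exact: cvg_cst.
- by apply: cvgD; apply: cvgM => //; exact: cvg_cst.
Qed.

End perturbation.

Theorem lemma2p2 (R : realType) (p : R -> R) (alpha beta theta : R)
  (phi : R -> R[i]) (theta_e : R -> R) :
  admissible_coef p ->
  0 < alpha -> alpha < beta -> beta < 1 ->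
  0 <= theta < 1 ->
  Vsp p alpha beta theta phi ->
  (forall e : R, 0 < e -> 0 <= theta_e e < 1) ->
  theta_e e @[e --> 0^'+] --> theta ->
  exists (phi_e dphi_e : R -> R -> R[i]) (dphi : R -> R[i]),
    wderiv01 phi dphi /\
    (forall e : R, 0 < e ->
       Vsp p alpha beta (theta_e e) (phi_e e) /\ wderiv01 (phi_e e) (dphi_e e)) /\
    H1dist2 (phi_e e) (dphi_e e) phi dphi @[e --> 0^'+] --> 0.
Proof.
move=> _ /ltW a_ge0 ab /ltW b_le1 _ [[_ phi_bc] [g [wg g_ae]]] _ cvg_theta.
pose k e := expi2pi (theta_e e) * phi 0 - phi 1.
pose phi_e e x := phi x + ((ramp alpha beta x)%:C * k e)%C.
pose dphi_e e x := g x + ((ramp_deriv alpha beta x)%:C * k e)%C.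
have wd e : wderiv01 (phi_e e) (dphi_e e).
  apply: (wderiv01D wg); apply: wderiv01_scale => [|x _]; last exact: ramp_integral.
  exact: L2_ramp_deriv.
exists phi_e, dphi_e, g; split => //; split.
  move=> e _; split => //; split.
    split; first by exists (dphi_e e).
    by rewrite /phi_e ramp0 // ramp1 // rmorph0 rmorph1 mul0r mul1r addr0 addrC subrK.
  (* the instance search does not see through the [nbhs] around the a.e. filter *)
  have ae_filter := ae_filter_ringOfSetsType (@lebesgue_measure R).
  exists (dphi_e e); split => //; apply: (filterS _ g_ae) => y g_y Q1y.
  by rewrite /dphi_e ramp_deriv_Q1 // rmorph0 mul0r addr0; exact: g_y.
pose C := Rintegral lebesgue_measure `[0, 1] (fun x => ramp alpha beta x ^+ 2) +
          Rintegral lebesgue_measure `[0, 1] (fun x => ramp_deriv alpha beta x ^+ 2).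
have dist_e : (fun e => H1dist2 (phi_e e) (dphi_e e) phi g) = fun e => sqmod (k e) * C.
  apply/funext => e; apply: H1dist2_addCM; apply: L2_sqr_integrable.
    exact: L2_ramp.
  exact: L2_ramp_deriv.
rewrite dist_e -[X in _ --> X](mul0r C); apply: cvgM (cvg_cst C).
exact: cvg_expi2pi_sqmod cvg_theta (esym phi_bc).
Qed.
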